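(* Consider Algorithm 1 (described in the context) run on a strongly connected digraph $\mathcal{G}_d$ with edge bounds $1\le l_{ji}\le u_{ji}$, under any realization of transmission delays bounded by $\overline{\tau}<\infty$, and assume the integer circulation conditions hold: (i) $\lceil l_{ji}\rceil\le\lfloor u_{ji}\rfloor$ for every $(v_j,v_i)\in\mathcal{E}$, and (ii) for every $\mathcal{S}\subset\mathcal{V}$, $\sum_{(v_j,v_i)\in\mathcal{E}^-_{\mathcal{S}}}\lceil l_{ji}\rceil\le\sum_{(v_l,v_j)\in\mathcal{E}^+_{\mathcal{S}}}\lfloor u_{lj}\rfloor$. Then there exists $k_0$ such that for all $k\ge k_0$: $f_{ji}[k]=f_{ji}[k_0]$ with $l_{ji}\le f_{ji}[k]\le u_{ji}$ for every $(v_j,v_i)\in\mathcal{E}$, and $b_j[k]=0$ for every $v_j\in\mathcal{V}$.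
   Context: Setting: $\mathcal{G}_d=(\mathcal{V},\mathcal{E})$ is a strongly connected digraph, $\mathcal{V}=\{v_1,\dots,v_n\}$, $n\ge2$; an edge $(v_j,v_i)$ carries flow from $v_i$ to $v_j$. $\mathcal{N}_j^-=\{v_i:(v_j,v_i)\in\mathcal{E}\}$, $\mathcal{N}_j^+=\{v_l:(v_l,v_j)\in\mathcal{E}\}$, $\mathcal{D}_j=|\mathcal{N}_j^-|+|\mathcal{N}_j^+|$. For $\mathcal{S}\subset\mathcal{V}$: $\mathcal{E}^-_{\mathcal{S}}=\{(v_j,v_i)\in\mathcal{E}: v_j\in\mathcal{S},\ v_i\notin\mathcal{S}\}$, $\mathcal{E}^+_{\mathcal{S}}=\{(v_l,v_j)\in\mathcal{E}: v_j\in\mathcal{S},\ v_l\notin\mathcal{S}\}$. Each edge has real bounds $1\le l_{ji}\le u_{ji}$. Communication is bidirectional along every edge. Projection: $[x]_{ji}=\max\{\lceil l_{ji}\rceil,\min\{\lfloor u_{ji}\rfloor,x\}\}$. State: for each edge $(v_l,v_j)$, the tail $v_j$ holds the actual flow $f_{lj}[k]$; for each edge $(v_j,v_i)$, the head $v_j$ holds a perceived flow $f^{(p)}_{ji}[k]$. Actual balance $b_j[k]=\sum_{v_i\in\mathcal{N}_j^-}f_{ji}[k]-\sum_{v_l\in\mathcal{N}_j^+}f_{lj}[k]$; perceived balance $b^{(p)}_j[k]=\sum_{v_i\in\mathcal{N}_j^-}f^{(p)}_{ji}[k]-\sum_{v_l\in\mathcal{N}_j^+}f_{lj}[k]$. Algorithm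 1. Initialization: $f_{ji}[0]=f^{(p)}_{ji}[0]=\lceil l_{ji}\rceil$ for all edges; each $v_j$ fixes a cyclic order of its $\mathcal{D}_j$ incident (incoming and outgoing) edges and a pointer into it. Iteration $k=0,1,2,\dots$, at each node $v_j$: (1) compute $b^{(p)}_j[k]$. (2) If $b^{(p)}_j[k]>0$, starting at the pointer and cycling through the order, visit edges one at a time: at an outgoing edge $(v_l,v_j)$, if $f_{lj}[k]+c^{(j)}_{lj}[k]<\lfloor u_{lj}\rfloor$ add $1$ to $c^{(j)}_{lj}[k]$; at an incoming edge $(v_j,v_i)$, if $f^{(p)}_{ji}[k]+c^{(j)}_{ji}[k]>\lceil l_{ji}\rceil$ subtract $1$ from $c^{(j)}_{ji}[k]$ (the $c$'s start at $0$; edges at their limit are skipped); stop as soon as the total number of unit changes equals $b^{(p)}_j[k]$, leaving the pointer at the next edge. If $b^{(p)}_j[k]\le 0$, all $c^{(j)}[k]=0$. (3) $v_j$ transmits $c^{(j)}_{lj}[k]$ to each out-neighbor $v_l$ and $c^{(j)}_{ji}[k]$ to each in-neighbor $v_i$. A message sent at step $k$ over a link in a given direction is delivered at step $k+\tau$, where the integer $\tau\in[0,\overline{\tau}]$ is arbitrary (unknown, time-varying, independent across links and directions). (4) $v_j$ forms $\overline{c}^{(l)}_{lj}[k]$ (resp. $\overline{c}^{(i)}_{ji}[k]$) as the sum of all values $c^{(l)}_{lj}[k_0]$ (resp. $c^{(i)}_{ji}[k_0]$) sent by $v_l$ (resp. $v_i$) that are delivered at step $k$ (zero if none). (5)–(6)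 $f_{lj}[k+1]=[f_{lj}[k]+c^{(j)}_{lj}[k]+\overline{c}^{(l)}_{lj}[k]]_{lj}$ and $f^{(p)}_{ji}[k+1]=[f^{(p)}_{ji}[k]+c^{(j)}_{ji}[k]+\overline{c}^{(i)}_{ji}[k]]_{ji}$. *)

From HB Require Import structures.
From mathcomp Require Import all_boot all_order all_algebra.
Set Implicit Arguments. Unset Strict Implicit. Unset Printing Implicit Defensive.
Import Order.TTheory GRing.Theory Num.Theory.
Local Open Scope ring_scope.

(* Nodes are 'I_n; an edge (v_j, v_i) is the pair (j, i) : 'I_n * 'I_n and
   carries flow from i (its tail, e.2) to j (its head, e.1). *)
Definition edge (n : nat) := ('I_n * 'I_n)%type.

Section Alg.
Variables (R : archiRealFieldType) (n : nat).
Variables (E : {set edge n}) (l u : edge n -> R).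

Definition lo (e : edge n) : int := Num.ceil (l e).
Definition hi (e : edge n) : int := Num.floor (u e).

Definition proj (e : edge n) (x : int) : int := Num.max (lo e) (Num.min (hi e) x).

Definition balance (f : edge n -> int) (j : 'I_n) : int :=
  \sum_(e in E | e.1 == j) f e - \sum_(e in E | e.2 == j) f e.

Definition pbalance (f fp : edge n -> int) (j : 'I_n) : int :=
  \sum_(e in E | e.1 == j) fp e - \sum_(e in E | e.2 == j) f e.

Definition upd (c : edge n -> int) (e : edge n) (d : int) : edge n -> int :=
  fun e' => if e' == e then c e + d else c e'.

(* Returns the changes and the new
   pointer.  [fuel] only guarantees structural termination; it is chosen large
   enough (see node_step) never to run out when the circulation conditions hold. *)
Fixpoint rr (j : 'I_n) (f fp : edge n -> int) (s : seq (edge n))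
    (fuel : nat) (p : nat) (need : nat) (c : edge n -> int)
    : (edge n -> int) * nat :=
  match fuel with
  | 0%N => (c, p)
  | fuel'.+1 =>
    if need == 0%N then (c, p) else
    match s with
    | [::] => (c, p)
    | e0 :: _ =>
      let e := nth e0 s (p %% size s) in
      let p' := (p.+1 %% size s)%N in
      if e.2 == j then
        if f e + c e < hi e then rr j f fp s fuel' p' need.-1 (upd c e 1)
        else rr j f fp s fuel' p' need c
      else
        if fp e + c e > lo e then rr j f fp s fuel' p' need.-1 (upd c e (-1))
        else rr j f fp s fuel' p' need c
    end
  end.

Definition node_step (ord : 'I_n -> seq (edge n)) (j : 'I_n)
    (f fp : edge n -> int) (p : nat) : (edge n -> int) * nat :=
  let bp := pbalance f fp j in
  if 0 < bp then
    rr j f fp (ord j) ((absz bp).+1 * (size (ord j)).+1)%N p (absz bp) (fun _ => 0)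
  else (fun _ => 0, p).

(* An execution of Algorithm 1: f k e (actual flow held by tail e.2),
   fp k e (perceived flow held by head e.1), ptr k j (pointer of node j).
   dT e k : delay of the message sent at step k by the tail of e to its head;
   dH e k : delay of the message sent at step k by the head of e to its tail. *)
Definition is_run (ord : 'I_n -> seq (edge n)) (p0 : 'I_n -> nat)
    (dT dH : edge n -> nat -> nat)
    (f fp : nat -> edge n -> int) (ptr : nat -> 'I_n -> nat) : Prop :=
  let cT k e := (node_step ord e.2 (f k) (fp k) (ptr k e.2)).1 e in
  let cH k e := (node_step ord e.1 (f k) (fp k) (ptr k e.1)).1 e in
  (forall e, f 0%N e = lo e /\ fp 0%N e = lo e) /\
  (forall j, ptr 0%N j = p0 j) /\
  (forall k,
     (forall j, ptr k.+1 j = (node_step ord j (f k) (fp k) (ptr k j)).2) /\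
     (forall e,
        f k.+1 e = proj e (f k e + cT k e +
                      \sum_(k0 < k.+1 | (k0 + dH e k0 == k)%N) cH k0 e) /\
        fp k.+1 e = proj e (fp k e + cH k e +
                      \sum_(k0 < k.+1 | (k0 + dT e k0 == k)%N) cT k0 e))).

End Alg.

From HB Require Import structures.
From mathcomp Require Import all_boot all_order all_algebra.
From mathcomp Require Import zify ring lra.
From Stdlib Require Import Classical ClassicalEpsilon.
Import Order.TTheory GRing.Theory Num.Theory.
Set Implicit Arguments. Unset Strict Implicit. Unset Printing Implicit Defensive.
Local Open Scope ring_scope.

(* The "true flow" Ft of an edge is lo plus all the
   changes ever made to it by both ends; the tail only increases an edge and
   the head only decreases it, so the value held by the head lies below Ft
   and the value held by the tail above it, and the projection never acts.
   Consequently the perceived balance of a node is at most its true balance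
   B, and a node can drive B down by at most its perceived balance: once
   active, a node keeps B >= 0.  A node that is active infinitely often
   serves each incident edge infinitely often in its round robin, so an edge
   between such a node and an eventually silent one is pushed to its bound.
   For the set of infinitely-often-active nodes the cut condition then makes
   the total B nonpositive, contradicting positivity at an active node: all
   nodes fall silent, after taubar more steps every message has arrived, the
   flows freeze, and since balances sum to zero and none is positive they
   all vanish. *)

Lemma upd_same n (c : edge n -> int) e d : upd c e d e = c e + d.
Proof. by rewrite /upd eqxx. Qed.

Lemma upd_other n (c : edge n -> int) e d e' : e' != e -> upd c e d e' = c e'.
Proof. by rewrite /upd => /negbTE ->. Qed.

Section RoundRobin.
Variables (R : archiRealFieldType) (n : nat) (l u : edge n -> R).
Variables (j : 'I_n) (f fp : edge n -> int) (s : seq (edge n)).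

Definition admissible (c : edge n -> int) :=
  forall e, (e.2 == j -> 0 <= c e /\ (c e = 0 \/ f e + c e <= hi u e)) /\
            (e.2 != j -> c e <= 0 /\ (c e = 0 \/ lo l e <= fp e + c e)).

Definition extends (c0 c : edge n -> int) :=
  forall e, (e.2 == j -> c0 e <= c e) /\ (e.2 != j -> c e <= c0 e).

Definition served (e : edge n) (c : edge n -> int) :=
  (e.2 == j -> f e < hi u e -> 1 <= c e) /\
  (e.2 != j -> lo l e < fp e -> c e <= -1).

Lemma admissible0 : admissible (fun=> 0).
Proof. by move=> e; split=> _; split=> //; left. Qed.

Lemma extends_refl c : extends c c.
Proof. by move=> e; split. Qed.

Lemma extends_trans c1 c2 c3 : extends c1 c2 -> extends c2 c3 -> extends c1 c3.
Proof.
move=> h12 h23 e; have [a1 b1] := h12 e; have [a2 b2] := h23 e.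
by split=> h; [exact: le_trans (a1 h) (a2 h) | exact: le_trans (b2 h) (b1 h)].
Qed.

Lemma served_extends e c c' : served e c -> extends c c' -> served e c'.
Proof.
move=> [h1 h2] hc; have [a b] := hc e.
by split=> he hlt; [exact: le_trans (h1 he hlt) (a he) | exact: le_trans (b he) (h2 he hlt)].
Qed.

Definition visit (c : edge n -> int) (e : edge n) : edge n -> int :=
  if e.2 == j then (if f e + c e < hi u e then upd c e 1 else c)
  else (if fp e + c e > lo l e then upd c e (-1) else c).

Lemma visit_spec c e : admissible c ->
  [/\ admissible (visit c e), extends c (visit c e) & served e (visit c e)].
Proof.
move=> Hc; rewrite /visit; have [Ho Hi] := Hc e.
case: ifP => He; case: ifP => Hlt.
- have [h _] := Ho He; split.
  + move=> e'; have [->|ne] := eqVneq e' e; last by rewrite !upd_other.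
    by rewrite upd_same He; split=> // _; split; [lia | right; lia].
  + move=> e'; have [->|ne] := eqVneq e' e; last by rewrite upd_other.
    by rewrite upd_same He; split=> // _; lia.
  + by split; [move=> _ _; rewrite upd_same; lia | rewrite He].
- split; [exact: Hc | exact: extends_refl |].
  by split; [move=> _ lt; have [h _] := Ho He; lia | rewrite He].
- have [h _] := Hi (negbT He); split.
  + move=> e'; have [->|ne] := eqVneq e' e; last by rewrite !upd_other.
    by rewrite upd_same He; split=> // _; split; [lia | right; lia].
  + move=> e'; have [->|ne] := eqVneq e' e; last by rewrite upd_other.
    by rewrite upd_same He; split=> // _; lia.
  + by split; [rewrite He | move=> _ _; rewrite upd_same; lia].
- split; [exact: Hc | exact: extends_refl |].
  by split; [rewrite He | move=> _ lt; have [h _] := Hi (negbT He); lia].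
Qed.

Definition moves (c : edge n -> int) (e : edge n) : bool :=
  if e.2 == j then f e + c e < hi u e else lo l e < fp e + c e.

Lemma rr_step a s0 fuel p need c : s = a :: s0 ->
  rr l u j f fp s fuel.+1 p need.+1 c =
  rr l u j f fp s fuel (p.+1 %% size s)
     (need.+1 - moves c (nth a s (p %% size s))) (visit c (nth a s (p %% size s))).
Proof.
move=> Es; set e := nth a s _ => /=.
move: Es; case Es': s => [//|a' s1] [? ?]; subst a' s1.
rewrite -Es' -/e /visit /moves.
by case: ifP => _; case: ifP => _; rewrite ?subn1 ?subn0.
Qed.

Lemma rr_admissible fuel p need c : admissible c ->
  admissible (rr l u j f fp s fuel p need c).1 /\
  extends c (rr l u j f fp s fuel p need c).1.
Proof.
elim: fuel p need c => [|fuel IH] p [|need] c Hc;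
  try by case: s => *; split=> //; exact: extends_refl.
case Es: s => [|a s0]; first by split=> //; exact: extends_refl.
rewrite -Es (rr_step _ _ _ _ Es); set e := nth a s _.
have [Hv Hext _] := visit_spec e Hc.
have [IH1 IH2] := IH (p.+1 %% size s)%N (need.+1 - moves c e)%N _ Hv.
by split=> //; exact: extends_trans Hext IH2.
Qed.

Definition net (c : edge n -> int) : int :=
  \sum_(e <- s) (if e.2 == j then c e else - c e).

Lemma net_visit c e : uniq s -> e \in s -> net (visit c e) = net c + (moves c e)%:Z.
Proof.
move=> us es; rewrite /visit /moves /net.
case: ifP => He; case: ifP => Hm; rewrite ?addr0 //;
  rewrite !(bigD1_seq e) //= upd_same He;
  rewrite (eq_bigr (fun x => if x.2 == j then c x else - c x)) => [|x nx];
  rewrite ?upd_other //; ring.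
Qed.

Lemma rr_net fuel p need c : uniq s ->
  net (rr l u j f fp s fuel p need c).1 <= net c + need%:Z.
Proof.
move=> us; elim: fuel p need c => [|fuel IH] p [|need] c;
  try by case: s => /=; lia.
case Es: s => [|a s0]; first by rewrite /=; lia.
rewrite -Es (rr_step _ _ _ _ Es); set e := nth a s _.
have es : e \in s by rewrite mem_nth // ltn_pmod // Es.
apply: le_trans (IH _ _ _) _; rewrite net_visit //.
by case: (moves c e); rewrite ?subn1 ?subn0 /=; lia.
Qed.

Lemma rr_visit a s0 fuel p need c : s = a :: s0 -> admissible c ->
  exists m, [/\ (0 < need)%N -> (0 < fuel)%N -> (0 < m)%N,
   ((rr l u j f fp s fuel p need c).2 %% size s = (p + m) %% size s)%N &
   forall i, (i < m)%N ->
     served (nth a s ((p + i) %% size s)) (rr l u j f fp s fuel p need c).1].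
Proof.
move=> Es; elim: fuel p need c => [|fuel IH] p [|need] c Hc;
  try by exists 0%N; rewrite ?Es addn0.
rewrite (rr_step _ _ _ _ Es); set e := nth a s _.
have [Hv _ He] := visit_spec e Hc.
have [m [_ Hp Hs]] := IH (p.+1 %% size s)%N (need.+1 - moves c e)%N _ Hv.
have [_ Hext] := rr_admissible fuel (p.+1 %% size s) (need.+1 - moves c e) Hv.
exists m.+1; split=> //; first by rewrite Hp modnDml addSnnS.
case=> [|i] Hi; first by rewrite addn0; exact: served_extends He Hext.
by have := Hs i Hi; rewrite modnDml addSnnS.
Qed.

End RoundRobin.

Lemma sum_balance n (E : {set edge n}) (S : {set 'I_n}) (F : edge n -> int) :
  \sum_(j in S) balance E F j =
  \sum_(e in E | (e.1 \in S) && (e.2 \notin S)) F e -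
  \sum_(e in E | (e.2 \in S) && (e.1 \notin S)) F e.
Proof.
have ends g : \sum_(j in S) \sum_(e in E | g e == j) F e = \sum_(e in E | g e \in S) F e.
  rewrite (partition_big g (fun j => j \in S)) /=; last by move=> e /andP [].
  apply: eq_bigr => j jS; apply: eq_bigl => e.
  by case: eqP => [->|]; rewrite ?jS ?andbT ?andbF.
rewrite /balance sumrB !ends.
rewrite (bigID (fun e => e.2 \in S) (fun e => (e \in E) && (e.1 \in S))) /=.
rewrite [X in _ - X](bigID (fun e => e.1 \in S)) /=.
have -> : \sum_(e | (e \in E) && (e.1 \in S) && (e.2 \in S)) F e =
          \sum_(e | (e \in E) && (e.2 \in S) && (e.1 \in S)) F e.
  by apply: eq_bigl => e; case: (e \in E); case: (e.1 \in S); case: (e.2 \in S).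
rewrite -!(eq_bigl _ _ (fun e => andbA (e \in E) _ _)).
ring.
Qed.

Lemma balanceD n (E : {set edge n}) (F G : edge n -> int) j :
  balance E (fun e => F e + G e) j = balance E F j + balance E G j.
Proof. by rewrite /balance !big_split /=; ring. Qed.

Lemma eq_in_balance n (E : {set edge n}) (F G : edge n -> int) j :
  {in E, F =1 G} -> balance E F j = balance E G j.
Proof.
by move=> h; rewrite /balance; congr (_ - _); apply: eq_bigr => e /andP [eE _]; exact: h.
Qed.

(* The value seen at time k by one end of an edge: all of its own changes a,
   plus those changes b of the other end that were sent at k0 with delay
   d k0 and have already been delivered (k0 + d k0 < k). *)
Definition delivered (a b : nat -> int) (d : nat -> nat) (k : nat) : int :=
  \sum_(k0 < k) (a k0 + (if (k0 + d k0 < k)%N then b k0 else 0)).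

(* The recursion performed by Algorithm 1 at each step, before projection. *)
Lemma deliveredS (a b : nat -> int) (d : nat -> nat) (k : nat) :
  delivered a b d k.+1 =
  delivered a b d k + a k + \sum_(k0 < k.+1 | (k0 + d k0 == k)%N) b k0.
Proof.
have split_lt (x : int) k0 : (if (k0 < k.+1)%N then x else 0) =
    (if (k0 < k)%N then x else 0) + (if k0 == k then x else 0).
  rewrite ltnS leq_eqVlt; have [->|_] := eqVneq k0 k; first by rewrite ltnn /=; ring.
  by case: ifP => _; ring.
rewrite /delivered big_ord_recr /= (eq_bigr (fun i : 'I_k =>
  (a i + (if (i + d i < k)%N then b i else 0)) + (if (i + d i == k)%N then b i else 0)));
  last by move=> i _; rewrite split_lt addrA.
rewrite big_split /= [\sum_(k0 < k.+1 | _) _]big_mkcond big_ord_recr /=.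
have -> : (k + d k < k.+1)%N = (k + d k == k)%N by apply/idP/idP; lia.
by case: ifP => _; ring.
Qed.

Lemma delivered_le (a b : nat -> int) (d : nat -> nat) (k : nat) :
  (forall k0, 0 <= b k0) ->
  delivered a b d k <= \sum_(k0 < k) (a k0 + b k0).
Proof. by move=> hb; apply: ler_sum => i _; rewrite lerD2l; case: ifP. Qed.

Lemma delivered_ge (a b : nat -> int) (d : nat -> nat) (k : nat) :
  (forall k0, b k0 <= 0) ->
  \sum_(k0 < k) (a k0 + b k0) <= delivered a b d k.
Proof. by move=> hb; apply: ler_sum => i _; rewrite lerD2l; case: ifP. Qed.

Lemma delivered_all (a b : nat -> int) (d : nat -> nat) (K tau k : nat) :
  (forall k0, (K <= k0)%N -> b k0 = 0) -> (forall k0, (d k0 <= tau)%N) ->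
  (K + tau <= k)%N -> delivered a b d k = \sum_(k0 < k) (a k0 + b k0).
Proof.
move=> hb hd hk; apply: eq_bigr => i _; case: ifP => // late.
by rewrite hb //; case: (ltnP i K) => // iK; move: late; have := hd i; lia.
Qed.

Lemma descends_to_floor (g : nat -> int) (b : int) (K : nat) :
  (forall k, b <= g k) -> (forall k, (K <= k)%N -> g k.+1 <= g k) ->
  (forall T, exists2 k, (T <= k)%N & g k = b \/ g k.+1 < g k) ->
  exists K', forall k, (K' <= k)%N -> g k = b.
Proof.
move=> lb mono hit.
have mon k t : (K <= k)%N -> g (k + t)%N <= g k.
  move=> Kk; elim: t => [|t IH]; first by rewrite addn0.
  by rewrite addnS; apply: le_trans (mono _ (leq_trans Kk (leq_addr _ _))) IH.
have monle k k' : (K <= k <= k')%N -> g k' <= g k.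
  by case/andP=> Kk kk'; rewrite -(subnKC kk'); exact: mon.
have reach (d : nat) k : (K <= k)%N -> g k - b <= d%:Z -> exists2 k', (k <= k')%N & g k' = b.
  elim: d k => [|d IH] k Kk hd; first by exists k => //; have := lb k; lia.
  have [k1 kk1 [at_b|drop]] := hit k; first by exists k1.
  have Kk1 : (K <= k1)%N := leq_trans Kk kk1.
  have hd1 : g k1.+1 - b <= d%:Z.
    have := monle k k1; rewrite Kk kk1 => /(_ isT).
    by move: hd drop; rewrite -addn1 PoszD; lia.
  have [k' k1k' gb] := IH k1.+1 (leq_trans Kk1 (leqnSn _)) hd1.
  by exists k' => //; apply: leq_trans k1k'; exact: leq_trans kk1 (leqnSn _).
have [k' Kk' gb] := reach _ K (leqnn _) (ler_norm (g K - b)).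
exists k' => k kk; apply/eqP; rewrite eq_le lb andbT -gb.
by apply: monle; rewrite kk (leq_trans Kk').
Qed.

Lemma eventually_forall (T : finType) (Q : T -> nat -> Prop) :
  (forall t, exists K, forall k, (K <= k)%N -> Q t k) ->
  exists K, forall t k, (K <= k)%N -> Q t k.
Proof.
move=> H.
suff [K HK] : exists K, forall t, t \in enum T -> forall k, (K <= k)%N -> Q t k.
  by exists K => t k; apply: HK; rewrite mem_enum.
elim: (enum T) => [|a s [K HK]]; first by exists 0%N.
have [Ka HKa] := H a; exists (maxn K Ka) => t; rewrite inE => /predU1P [->|ts] k h.
  by apply: HKa; apply: leq_trans h; rewrite leq_maxr.
by apply: HK => //; apply: leq_trans h; rewrite leq_maxl.
Qed.

(* Every unit of flow leaves one node and enters another: balances sum to 0,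
   so balances that are all nonpositive all vanish. *)
Lemma nonpos_balances_vanish n (E : {set edge n}) (F : edge n -> int) :
  (forall j, balance E F j <= 0) -> forall j, balance E F j = 0.
Proof.
move=> le0 j; have total : \sum_(i in [set: 'I_n]) - balance E F i = 0.
  rewrite sumrN sum_balance !big_pred0 ?subrr ?oppr0 // => e;
    by rewrite !in_setT /= !andbF.
apply/eqP; rewrite -oppr_eq0; apply/eqP.
have ge0 i : i \in [set: 'I_n] -> 0 <= - balance E F i by rewrite oppr_ge0 le0.
by apply: (psumr_eq0P ge0 total); rewrite in_setT.
Qed.

Definition holds (P : Prop) : bool := if excluded_middle_informative P then true else false.

Lemma holdsP (P : Prop) : reflect P (holds P).
Proof. by rewrite /holds; case: excluded_middle_informative => h; constructor. Qed.

Section Run.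
Variables (R : archiRealFieldType) (n : nat) (E : {set edge n}) (l u : edge n -> R)
  (taubar : nat) (ord : 'I_n -> seq (edge n)) (p0 : 'I_n -> nat)
  (dT dH : edge n -> nat -> nat) (f fp : nat -> edge n -> int)
  (ptr : nat -> 'I_n -> nat).
Hypothesis no_loop : forall e, e \in E -> e.1 != e.2.
Hypothesis Hord : forall j, uniq (ord j) /\
  forall e, (e \in ord j) = (e \in E) && ((e.1 == j) || (e.2 == j)).
Hypothesis Hdelay : forall e k, (dT e k <= taubar)%N /\ (dH e k <= taubar)%N.
Hypothesis Hlohi : forall e, e \in E -> lo l e <= hi u e.
Hypothesis Hrun : is_run E l u ord p0 dT dH f fp ptr.

Lemma tail_not_head e : e \in E -> e.2 != e.1.
Proof. by move=> eE; rewrite eq_sym no_loop. Qed.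

Definition active k j := 0 < pbalance E (f k) (fp k) j.

Definition cc k j := (node_step E l u ord j (f k) (fp k) (ptr k j)).1.
Local Notation cT k e := (cc k e.2 e).
Local Notation cH k e := (cc k e.1 e).

Lemma run_init e : f 0%N e = lo l e /\ fp 0%N e = lo l e.
Proof. by case: Hrun => H _; exact: H. Qed.

Lemma run_f k e : f k.+1 e = proj l u e (f k e + cT k e +
  \sum_(k0 < k.+1 | (k0 + dH e k0 == k)%N) cH k0 e).
Proof. by case: Hrun => _ [_ H]; exact: ((H k).2 e).1. Qed.

Lemma run_fp k e : fp k.+1 e = proj l u e (fp k e + cH k e +
  \sum_(k0 < k.+1 | (k0 + dT e k0 == k)%N) cT k0 e).
Proof. by case: Hrun => _ [_ H]; exact: ((H k).2 e).2. Qed.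

Lemma run_ptr k j : ptr k.+1 j = (node_step E l u ord j (f k) (fp k) (ptr k j)).2.
Proof. by case: Hrun => _ [_ H]; exact: (H k).1. Qed.

Lemma cc_inactive k j e : ~~ active k j -> cc k j e = 0.
Proof. by rewrite /active /cc /node_step => /negbTE ->. Qed.

Lemma ptr_inactive k j : ~~ active k j -> ptr k.+1 j = ptr k j.
Proof. by rewrite run_ptr /active /node_step => /negbTE ->. Qed.

Lemma cc_admissible k j : admissible l u j (f k) (fp k) (cc k j).
Proof.
have c0 := admissible0 l u j (f k) (fp k).
rewrite /cc /node_step; case: ifP => _ //.
exact: (rr_admissible (ord j) _ _ _ c0).1.
Qed.

Lemma cT_ge0 k e : 0 <= cT k e.
Proof. exact: ((cc_admissible k e.2 e).1 (eqxx _)).1. Qed.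

Lemma cH_le0 k e : e \in E -> cH k e <= 0.
Proof. by move=> eE; exact: ((cc_admissible k e.1 e).2 (tail_not_head eE)).1. Qed.

Lemma cT_bounded k e : cT k e = 0 \/ f k e + cT k e <= hi u e.
Proof. exact: ((cc_admissible k e.2 e).1 (eqxx _)).2. Qed.

Lemma cH_bounded k e : e \in E -> cH k e = 0 \/ lo l e <= fp k e + cH k e.
Proof. by move=> eE; exact: ((cc_admissible k e.1 e).2 (tail_not_head eE)).2. Qed.

(* The true flow: the edge value if every change were delivered at once. *)
Definition Ft k e := lo l e + \sum_(k0 < k) (cT k0 e + cH k0 e).

Lemma FtS k e : Ft k.+1 e = Ft k e + cT k e + cH k e.
Proof. by rewrite /Ft big_ord_recr /=; ring. Qed.

Lemma proj_id e x : lo l e <= x -> x <= hi u e -> proj l u e x = x.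
Proof. by move=> h1 h2; rewrite /proj (min_r h2) (max_r h1). Qed.

(* What the tail and the head of e hold, if the projection never acts:
   their own changes plus the delivered changes of the other end. *)
Definition tail_view k e :=
  lo l e + delivered (fun k0 => cT k0 e) (fun k0 => cH k0 e) (dH e) k.
Definition head_view k e :=
  lo l e + delivered (fun k0 => cH k0 e) (fun k0 => cT k0 e) (dT e) k.

(* Since the tail only increases and the head only decreases an edge, the
   true flow lies between the two views. *)
Lemma views_sandwich k e : e \in E -> head_view k e <= Ft k e <= tail_view k e.
Proof.
move=> eE; rewrite /head_view /tail_view /Ft !lerD2l; apply/andP; split.
  have := delivered_le _ (dT e) k (fun k0 => cT_ge0 k0 e).
  by under eq_bigr do rewrite addrC.
exact: delivered_ge (fun k0 => cH_le0 k0 eE).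
Qed.

(* The projection never acts: the tail and head of every edge hold exactly
   their views, which stay within [lo, hi]. *)
Lemma held_values k e : e \in E ->
  [/\ f k e = tail_view k e, fp k e = head_view k e,
      tail_view k e <= hi u e & lo l e <= head_view k e].
Proof.
move=> eE; elim: k => [|k [If Ifp Ihi Ilo]].
  have [-> ->] := run_init e.
  by rewrite /tail_view /head_view /delivered !big_ord0 addr0; split=> //; exact: Hlohi.
have arrH : \sum_(k0 < k.+1 | (k0 + dH e k0 == k)%N) cH k0 e <= 0.
  by rewrite sumr_le0 // => i _; exact: cH_le0.
have arrT : 0 <= \sum_(k0 < k.+1 | (k0 + dT e k0 == k)%N) cT k0 e.
  by rewrite sumr_ge0 // => i _; exact: cT_ge0.
have tailS : tail_view k.+1 e = tail_view k e + cT k e +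
    \sum_(k0 < k.+1 | (k0 + dH e k0 == k)%N) cH k0 e.
  by rewrite /tail_view deliveredS !addrA.
have headS : head_view k.+1 e = head_view k e + cH k e +
    \sum_(k0 < k.+1 | (k0 + dT e k0 == k)%N) cT k0 e.
  by rewrite /head_view deliveredS !addrA.
have hiT : tail_view k.+1 e <= hi u e.
  rewrite tailS; apply: le_trans (_ : _ <= tail_view k e + cT k e) _; first by rewrite gerDl.
  by case: (cT_bounded k e) => [->|]; rewrite ?addr0 // -If.
have loH : lo l e <= head_view k.+1 e.
  rewrite headS; apply: le_trans (_ : head_view k e + cH k e <= _); last by rewrite lerDl.
  by case: (cH_bounded k eE) => [->|]; rewrite ?addr0 // -Ifp.
have /andP [head_le tail_ge] := views_sandwich k.+1 eE.
split=> //.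
- by rewrite run_f If -tailS proj_id //; lia.
- by rewrite run_fp Ifp -headS proj_id //; lia.
Qed.

Lemma held_bounds k e : e \in E ->
  [/\ lo l e <= fp k e, fp k e <= Ft k e, Ft k e <= f k e & f k e <= hi u e].
Proof.
move=> eE; have [-> -> ? ?] := held_values k eE.
by have /andP [? ?] := views_sandwich k eE.
Qed.

Definition B k j := balance E (Ft k) j.

(* Perceived inflows are too low and actual outflows too high. *)
Lemma pbalance_le_B k j : pbalance E (f k) (fp k) j <= B k j.
Proof.
rewrite /pbalance /B /balance lerB //; apply: ler_sum => e /andP [eE _];
  by have [] := held_bounds k eE.
Qed.

Lemma net_ord j (c : edge n -> int) :
  net j (ord j) c = \sum_(e in E | e.2 == j) c e - \sum_(e in E | e.1 == j) c e.
Proof.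
have [U M] := Hord j; rewrite /net big_uniq //.
rewrite (eq_bigl (fun e => (e \in E) && ((e.1 == j) || (e.2 == j)))) => [|e]; last exact: M.
rewrite (bigID (fun e => e.2 == j)) /= -sumrN; congr (_ + _); apply: eq_big => e.
- by case: (e \in E) => //=; case: (e.2 == j); rewrite ?orbT ?andbF.
- by move=> /andP [_ ->].
- case eE: (e \in E) => //=; case: eqP => [e1|] /=; last by case: (e.2 == j).
  by rewrite -e1 tail_not_head.
- by move=> /andP [_ /negbTE ->].
Qed.

Lemma own_net k j :
  net j (ord j) (cc k j) <= (if active k j then pbalance E (f k) (fp k) j else 0).
Proof.
have net0 c : (forall e, c e = 0) -> net j (ord j) c = 0.
  by move=> c0; rewrite /net big1 // => e _; rewrite c0; case: ifP; rewrite ?oppr0.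
case: ifP => A; last by rewrite net0 // => e; rewrite cc_inactive ?A.
rewrite /cc /node_step -/(active k j) A.
apply: le_trans (rr_net l u j (f k) (fp k) _ _ _ _ (Hord j).1) _.
by rewrite net0 // add0r abszE gtr0_norm.
Qed.

(* The true balance can only drop by what j itself pushes out, which is at
   most its perceived balance. *)
Lemma B_step k j :
  B k j - (if active k j then pbalance E (f k) (fp k) j else 0) <= B k.+1 j.
Proof.
have own : \sum_(e in E | e.1 == j) cc k j e - \sum_(e in E | e.2 == j) cc k j e <=
           B k.+1 j - B k j.
  rewrite /B (@eq_in_balance _ _ (Ft k.+1) (fun e => Ft k e + (cT k e + cH k e)));
    last by move=> e _; rewrite FtS addrA.
  rewrite balanceD addrAC subrr add0r /balance; apply: lerB.
    by apply: ler_sum => e /andP [_ /eqP <-]; rewrite lerDr cT_ge0.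
  by apply: ler_sum => e /andP [eE /eqP <-]; rewrite gerDl cH_le0.
have := own_net k j; rewrite net_ord; lia.
Qed.

Lemma B_nonneg t j : active t j -> forall k, (t < k)%N -> 0 <= B k j.
Proof.
have step k : 0 <= B k j \/ active k j -> 0 <= B k.+1 j.
  move=> h; have := B_step k j; have := pbalance_le_B k j.
  by case: (active k j) h => [_|[] // h]; lra.
move=> At; elim=> // k IH; rewrite ltnS leq_eqVlt => /predU1P [<-|lt]; apply: step.
  by right.
by left; exact: IH.
Qed.

Lemma fp_settles K k e : e \in E -> (forall k0, (K <= k0)%N -> cT k0 e = 0) ->
  (K + taubar <= k)%N -> fp k e = Ft k e.
Proof.
move=> eE hT hk; have [_ -> _ _] := held_values k eE.
rewrite /head_view (delivered_all _ hT (fun k0 => (Hdelay e k0).1) hk).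
by congr (_ + _); apply: eq_bigr => i _; rewrite addrC.
Qed.

Lemma f_settles K k e : e \in E -> (forall k0, (K <= k0)%N -> cH k0 e = 0) ->
  (K + taubar <= k)%N -> f k e = Ft k e.
Proof.
move=> eE hH hk; have [-> _ _ _] := held_values k eE.
by rewrite /tail_view (delivered_all _ hH (fun k0 => (Hdelay e k0).2) hk).
Qed.

Lemma active_visit k x : active k x -> exists a s0, ord x = a :: s0 /\ exists m,
  [/\ (0 < m)%N, (ptr k.+1 x %% size (ord x) = (ptr k x + m) %% size (ord x))%N &
   forall i, (i < m)%N -> served l u x (f k) (fp k)
     (nth a (ord x) ((ptr k x + i) %% size (ord x))) (cc k x)].
Proof.
move=> A; case Eo: (ord x) => [|a s0].
  move: A; rewrite /active /pbalance !big_pred0 ?subrr ?ltxx // => e;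
    apply/negbTE/andP => -[eE ex]; have := (Hord x).2 e;
    by rewrite Eo in_nil eE ex ?orbT.
exists a, s0; split=> //; rewrite -Eo run_ptr /cc /node_step -/(active k x) A.
set bp := pbalance E (f k) (fp k) x.
have [m [pos Hp Hs]] := rr_visit ((`|bp|%N).+1 * (size (ord x)).+1) (ptr k x) `|bp|%N
  Eo (admissible0 l u x (f k) (fp k)).
exists m; split=> //; apply: pos => //.
by rewrite absz_gt0; move: A; rewrite /active -/bp; case: eqP => // ->.
Qed.

Definition io x := forall T, exists2 k, (T <= k)%N & active k x.

Lemma io_or_quiet x : io x \/ exists K, forall k, (K <= k)%N -> ~~ active k x.
Proof.
case: (classic (io x)) => h; [by left | right].
have [T hT] := not_all_ex_not _ _ h; exists T => k Tk; apply/negP => A.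
by apply: hT; exists k.
Qed.

Section Visit.
Variables (x : 'I_n) (e : edge n).
Hypothesis x_io : io x.
Hypothesis e_at_x : e \in ord x.

Local Notation S := (size (ord x)).
Let idx := index e (ord x).

(* Number of round-robin steps from pointer p to the position of e. *)
Let dist p := ((idx + S - p %% S) %% S)%N.

Lemma size_gt0 : (0 < S)%N.
Proof. by case: (ord x) e_at_x. Qed.

Lemma idx_lt : (idx < S)%N.
Proof. by rewrite /idx index_mem. Qed.

Lemma dist_hit p : ((p + dist p) %% S = idx)%N.
Proof.
have S0 := size_gt0; have I := idx_lt; rewrite /dist modnDmr -modnDml.
have rlt : (p %% S < S)%N by rewrite ltn_pmod.
have -> : (p %% S + (idx + S - p %% S) = idx + S)%N by lia.
by rewrite modnDr modn_small.
Qed.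

Lemma dist_char p b : ((p + b) %% S = idx)%N -> (b < S)%N -> dist p = b.
Proof.
move=> H1 H2; have S0 := size_gt0; have I := idx_lt; rewrite /dist.
set r := (p %% S)%N; have rlt : (r < S)%N by rewrite ltn_pmod.
have H1' : ((r + b) %% S = idx)%N by rewrite /r modnDml.
have Hd : ((r + b) %/ S < 2)%N by rewrite ltn_divLR //; lia.
have Hdq := divn_eq (r + b) S; rewrite H1' in Hdq.
case: ((r + b) %/ S)%N Hd Hdq => [|[|q]] // _ Hdq.
  have -> : (idx + S - r = b + S)%N by lia.
  by rewrite modnDr modn_small.
have -> : (idx + S - r = b)%N by lia.
by rewrite modn_small.
Qed.

(* The pointer of x only moves at active steps. *)
Lemma next_active k : exists k1, [/\ (k <= k1)%N, active k1 x & ptr k1 x = ptr k x].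
Proof.
have ex : exists k1, (k <= k1)%N && active k1 x.
  by have [k1 ? ?] := x_io k; exists k1; apply/andP.
case: (ex_minnP ex) => k1 /andP [kk1 A] Hmin; exists k1; split=> //.
suff keep t : (k + t <= k1)%N -> ptr (k + t) x = ptr k x by rewrite -(subnKC kk1) keep ?subnKC.
elim: t => [|t IH] h; first by rewrite addn0.
rewrite addnS ptr_inactive ?IH //; first lia.
by apply/negP => At; have := Hmin (k + t)%N; rewrite leq_addr At => /(_ isT); lia.
Qed.

Lemma served_io T : exists2 k, (T <= k)%N & served l u x (f k) (fp k) e (cc k x).
Proof.
suff reach d k : (T <= k)%N -> (dist (ptr k x) <= d)%N ->
    exists2 k', (T <= k')%N & served l u x (f k') (fp k') e (cc k' x).
  exact: reach _ T (leqnn _) (leqnn _).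
elim: d k => [|d IH] k Tk Hd;
  have [k1 [kk1 A P]] := next_active k;
  have [a [s0 [Eo [m [m0 Hp Hs]]]]] := active_visit A;
  have Tk1 := leq_trans Tk kk1; rewrite -P in Hd.
  exists k1 => //; have := Hs 0%N m0; rewrite addn0.
  have := dist_hit (ptr k1 x); have -> : dist (ptr k1 x) = 0%N by lia.
  by rewrite addn0 => ->; rewrite nth_index.
case: (ltnP (dist (ptr k1 x)) m) => hm.
  by exists k1 => //; have := Hs _ hm; rewrite dist_hit nth_index.
apply: (IH k1.+1); first exact: leq_trans Tk1 (leqnSn _).
have -> : dist (ptr k1.+1 x) = (dist (ptr k1 x) - m)%N; last by lia.
have dlt : (dist (ptr k1 x) < S)%N by rewrite ltn_pmod // size_gt0.
apply: dist_char; last by lia.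
by rewrite -modnDml Hp modnDml -addnA subnKC // dist_hit.
Qed.

End Visit.

(* An edge whose head is active infinitely often but whose tail eventually
   falls silent is eventually driven down to its lower bound: the true flow
   then only decreases, and whenever the head serves the edge above lo it
   decreases strictly. *)
Lemma settles_low e : e \in E -> io e.1 -> ~ io e.2 ->
  exists K, forall k, (K <= k)%N -> Ft k e = lo l e.
Proof.
move=> eE head_io tail_quiet.
have [//|[K1 HK1]] := io_or_quiet e.2.
have cT0 k : (K1 <= k)%N -> cT k e = 0 by move=> h; apply: cc_inactive; exact: HK1.
have e_at_head : e \in ord e.1 by rewrite (Hord e.1).2 eE eqxx.
apply: (@descends_to_floor _ _ (K1 + taubar)).
- by move=> k; have [h1 h2 _ _] := held_bounds k eE; exact: le_trans h1 h2.
- move=> k hk; rewrite FtS cT0 ?addr0 ?gerDl ?cH_le0 //.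
  exact: leq_trans (leq_addr _ _) hk.
move=> T; have [kv Tkv served_e] := served_io head_io e_at_head (maxn T (K1 + taubar)).
exists kv; first exact: leq_trans (leq_maxl _ _) Tkv.
have Kkv : (K1 + taubar <= kv)%N := leq_trans (leq_maxr _ _) Tkv.
have [->|above] := eqVneq (Ft kv e) (lo l e); [by left | right].
have lt : lo l e < fp kv e.
  rewrite (fp_settles eE cT0 Kkv) lt_neqAle eq_sym above /=.
  by have [h1 h2 _ _] := held_bounds kv eE; exact: le_trans h1 h2.
have := served_e.2 (tail_not_head eE) lt.
by rewrite FtS cT0 ?addr0 ?(leq_trans (leq_addr _ _) Kkv) //; lra.
Qed.

Lemma settles_high e : e \in E -> io e.2 -> ~ io e.1 ->
  exists K, forall k, (K <= k)%N -> Ft k e = hi u e.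
Proof.
move=> eE tail_io head_quiet.
have [//|[K1 HK1]] := io_or_quiet e.1.
have cH0 k : (K1 <= k)%N -> cH k e = 0 by move=> h; apply: cc_inactive; exact: HK1.
have e_at_tail : e \in ord e.2 by rewrite (Hord e.2).2 eE eqxx orbT.
suff [K HK] : exists K, forall k, (K <= k)%N -> - Ft k e = - hi u e.
  by exists K => k /HK /oppr_inj.
apply: (@descends_to_floor _ _ (K1 + taubar)).
- by move=> k; have [_ _ h1 h2] := held_bounds k eE; rewrite lerN2; exact: le_trans h1 h2.
- move=> k hk; rewrite FtS cH0 ?addr0 ?lerN2 ?lerDl ?cT_ge0 //.
  exact: leq_trans (leq_addr _ _) hk.
move=> T; have [kv Tkv served_e] := served_io tail_io e_at_tail (maxn T (K1 + taubar)).
exists kv; first exact: leq_trans (leq_maxl _ _) Tkv.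
have Kkv : (K1 + taubar <= kv)%N := leq_trans (leq_maxr _ _) Tkv.
have [->|below] := eqVneq (Ft kv e) (hi u e); [by left | right].
have lt : f kv e < hi u e.
  rewrite (f_settles eE cH0 Kkv) lt_neqAle below /=.
  by have [_ _ h1 h2] := held_bounds kv eE; exact: le_trans h1 h2.
have := served_e.1 (eqxx _) lt.
by rewrite FtS cH0 ?addr0 ?(leq_trans (leq_addr _ _) Kkv) //; lra.
Qed.

Definition io_set : {set 'I_n} := [set x | holds (io x)].

Lemma in_io_set x : reflect (io x) (x \in io_set).
Proof. by rewrite inE; exact: holdsP. Qed.

Lemma io_set_boundary : exists K, forall e k, (K <= k)%N -> e \in E ->
  (e.1 \in io_set -> e.2 \notin io_set -> Ft k e = lo l e) /\
  (e.2 \in io_set -> e.1 \notin io_set -> Ft k e = hi u e).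
Proof.
apply: eventually_forall => e; case eE: (e \in E); last by exists 0%N.
case: (in_io_set e.1) => i1; case: (in_io_set e.2) => i2;
  try by exists 0%N => k _ _; split=> // /negP.
- have [K HK] := settles_low eE i1 i2.
  by exists K => k hk _; split=> // _ _; exact: HK.
- have [K HK] := settles_high eE i2 i1.
  by exists K => k hk _; split=> // _ _; exact: HK.
Qed.

Hypothesis Hcut : forall S : {set 'I_n},
  \sum_(e in E | (e.1 \in S) && (e.2 \notin S)) lo l e
    <= \sum_(e in E | (e.2 \in S) && (e.1 \notin S)) hi u e.

(* No node is active infinitely often: otherwise the total true balance of
   io_set eventually is at most 0 by the cut condition, while each of its
   nodes has nonnegative true balance and an active one a positive one. *)
Lemma not_io j : ~ io j.
Proof.
move=> j_io; have [K1 boundary] := io_set_boundary.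
have [K2 B_ge0] : exists K, forall x k, (K <= k)%N -> x \in io_set -> 0 <= B k x.
  apply: eventually_forall => x; case: (in_io_set x) => ix; last by exists 0%N.
  by have [t _ At] := ix 0%N; exists t.+1 => k h _; exact: B_nonneg At k h.
have [k hk Ak] := j_io (maxn K1 K2).
have hk1 : (K1 <= k)%N := leq_trans (leq_maxl _ _) hk.
have hk2 : (K2 <= k)%N := leq_trans (leq_maxr _ _) hk.
have jA : j \in io_set by apply/in_io_set.
have lower : B k j <= \sum_(x in io_set) B k x.
  by rewrite (bigD1 j) //= lerDl sumr_ge0 // => x /andP [xA _]; exact: B_ge0.
have upper : \sum_(x in io_set) B k x <= 0.
  rewrite /B sum_balance subr_le0.
  rewrite (eq_bigr (lo l)) => [|e /andP [eE /andP [e1 e2]]]; last first.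
    exact: (boundary e k hk1 eE).1.
  rewrite [X in _ <= X](eq_bigr (hi u)) => [|e /andP [eE /andP [e2 e1]]]; last first.
    exact: (boundary e k hk1 eE).2.
  exact: Hcut.
by have := pbalance_le_B k j; move: Ak; rewrite /active; lra.
Qed.

Lemma quiescence : exists K, forall j k, (K <= k)%N -> ~~ active k j.
Proof.
apply: eventually_forall => j.
by case: (io_or_quiet j) => // /not_io.
Qed.

Lemma flow_in_bounds k e : e \in E -> l e <= (f k e)%:~R /\ (f k e)%:~R <= u e.
Proof.
move=> eE; have [h1 h2 h3 h4] := held_bounds k eE; split.
  by apply: le_trans (ceil_ge (l e)) _; rewrite ler_int (le_trans h1 (le_trans h2 h3)).
by apply: le_trans _ (floor_le (u e)); rewrite ler_int.
Qed.

Section Quiescent.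
Variable K : nat.
Hypothesis quiet : forall j k, (K <= k)%N -> ~~ active k j.

Lemma cc_quiet k j e : (K <= k)%N -> cc k j e = 0.
Proof. by move=> h; apply: cc_inactive; exact: quiet. Qed.

(* taubar steps after quiescence every message has arrived: both ends of
   every edge hold the true flow, which no longer changes. *)
Lemma settled_flows k e : e \in E -> (K + taubar <= k)%N ->
  f k e = Ft K e /\ fp k e = Ft K e.
Proof.
move=> eE hk; have Kk : (K <= k)%N := leq_trans (leq_addr _ _) hk.
have frozen t : Ft (K + t) e = Ft K e.
  elim: t => [|t IH]; first by rewrite addn0.
  by rewrite addnS FtS !cc_quiet ?leq_addr // !addr0.
have FtK : Ft k e = Ft K e by rewrite -(subnKC Kk) frozen.
have cT0 k0 : (K <= k0)%N -> cT k0 e = 0 by exact: cc_quiet.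
have cH0 k0 : (K <= k0)%N -> cH k0 e = 0 by exact: cc_quiet.
by rewrite (f_settles eE cH0 hk) (fp_settles eE cT0 hk) FtK.
Qed.

(* Then no node perceives a positive balance although balances sum to
   zero, so every balance vanishes. *)
Lemma settled_balance k j : (K + taubar <= k)%N -> balance E (f k) j = 0.
Proof.
move=> hk; have Kk : (K <= k)%N := leq_trans (leq_addr _ _) hk.
have -> : balance E (f k) j = balance E (Ft K) j.
  by apply: eq_in_balance => e eE; exact: (settled_flows eE hk).1.
have pbalE i : pbalance E (f k) (fp k) i = balance E (Ft K) i.
  rewrite /pbalance /balance; congr (_ - _); apply: eq_bigr => e /andP [eE _].
    exact: (settled_flows eE hk).2.
  exact: (settled_flows eE hk).1.
apply: nonpos_balances_vanish => i.
by have := quiet i Kk; rewrite /active pbalE -leNgt.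
Qed.

End Quiescent.

End Run.

Theorem proposition4 (R : archiRealFieldType) (n : nat) (E : {set edge n})
    (l u : edge n -> R) (taubar : nat)
    (ord : 'I_n -> seq (edge n)) (p0 : 'I_n -> nat)
    (dT dH : edge n -> nat -> nat)
    (f fp : nat -> edge n -> int) (ptr : nat -> 'I_n -> nat) :
  (2 <= n)%N ->
  (* simple digraph: no self-loops *)
  (forall e, e \in E -> e.1 != e.2) ->
  (* strongly connected *)
  (forall x y : 'I_n, connect (fun a b : 'I_n => (b, a) \in E) x y) ->
  (* bounds 1 <= l_ji <= u_ji *)
  (forall e, e \in E -> 1 <= l e /\ l e <= u e) ->
  (* each node's cyclic order lists each incident edge exactly once *)
  (forall j, uniq (ord j) /\
     forall e, (e \in ord j) = (e \in E) && ((e.1 == j) || (e.2 == j))) ->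
  (* delays bounded by taubar *)
  (forall e k, (dT e k <= taubar)%N /\ (dH e k <= taubar)%N) ->
  (* integer circulation conditions *)
  (forall e, e \in E -> lo l e <= hi u e) ->
  (forall S : {set 'I_n},
     \sum_(e in E | (e.1 \in S) && (e.2 \notin S)) lo l e
       <= \sum_(e in E | (e.2 \in S) && (e.1 \notin S)) hi u e) ->
  is_run E l u ord p0 dT dH f fp ptr ->
  exists k0 : nat, forall k : nat, (k0 <= k)%N ->
    (forall e, e \in E ->
       f k e = f k0 e /\ l e <= (f k e)%:~R /\ (f k e)%:~R <= u e) /\
    (forall j, balance E (f k) j = 0).
Proof.
move=> _ no_loop _ _ Hord Hdelay Hlohi Hcut Hrun.
have [K quiet] := quiescence no_loop Hord Hdelay Hlohi Hrun Hcut.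
exists (K + taubar)%N => k hk; split=> [e eE|j].
- have [fk _] := settled_flows no_loop Hdelay Hlohi Hrun quiet eE hk.
  have [fK _] := settled_flows no_loop Hdelay Hlohi Hrun quiet eE (leqnn _).
  by split; [rewrite fk fK | exact (flow_in_bounds no_loop Hlohi Hrun k eE)].
- exact (settled_balance no_loop Hdelay Hlohi Hrun quiet j hk).
Qed.
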